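(* Let $f:\mathcal{O}\to\mathcal{F}$ be a scaling map with scaling ratio $q^\lambda$, $\lambda\ge0$, and let $\tilde f:\mathcal{O}\to\mathcal{O}$, $\tilde f(x)=[f(x)]$. Then the normalized Haar measure $\mu$ on $\mathcal{O}$ is $\tilde f$-invariant, i.e. $\mu(\tilde f^{-1}(B))=\mu(B)$ for every Borel set $B\subset\mathcal{O}$.
   Context: $\mathcal{F}$ is a non-Archimedean local field with valuation ring $\mathcal{O}$, maximal ideal $\mathfrak{p}$, $q=\#\mathcal{O}/\mathfrak{p}$, normalized absolute value $|\cdot|_\mathfrak{p}$, prime element $\pi$. Fix representatives $C\subset\mathcal{O}$ of $\mathcal{O}/\mathfrak{p}$ with $0\in C$; writing $x=\sum_{n\ge v}c_n\pi^n$ ($c_n\in C$), $[x]=\sum_{n\ge0}c_n\pi^n$. A map $f:\Omega\to\mathcal{F}$ is scaling with ratio $q^\lambda$ if $|f(x)-f(y)|_\mathfrak{p}=q^\lambda|x-y|_\mathfrak{p}$ for all $x,y\in\Omega$. $\mu$ denotes Haar measure with $\mu(\mathcal{O})=1$. *)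

From HB Require Import structures.
From mathcomp Require Import all_boot all_order all_algebra.
From mathcomp Require Import all_classical all_reals all_analysis.
Set Implicit Arguments. Unset Strict Implicit. Unset Printing Implicit Defensive.
Import Order.TTheory GRing.Theory Num.Theory.
Local Open Scope classical_set_scope.
Local Open Scope ring_scope.

Section LocalField.
Variables (F : fieldType) (v : F -> int) (pi : F) (C : seq F).

(* v is a (normalized, discrete) valuation on F^x; its value at 0 is
   irrelevant (never used), 0 being treated as having valuation +oo. *)
Definition O_set : set F := [set x | x = 0 \/ (0 <= v x)%R].
Definition p_set : set F := [set x | x = 0 \/ (1 <= v x)%R].
(* closed ball {x | |x - a|_p <= q^(-n)} *)
Definition vball (a : F) (n : int) : set F := [set x | x = a \/ (n <= v (x - a))%R].

(* F is a non-Archimedean local field with valuation v, prime element pi and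
   set of representatives C of O/p (containing 0):
   - v is a discrete valuation, normalized with v pi = 1;
   - F is complete for the valuation topology;
   - C is a finite complete set of representatives of O/p, 0 \in C.
   (Finiteness of the residue field is expressed through the finite list C.) *)
Definition nonarch_local_field : Prop :=
  [/\ (forall x y, x != 0 -> y != 0 -> v (x * y) = v x + v y),
      (forall x y, x != 0 -> y != 0 -> x + y != 0 ->
                     (Order.min (v x) (v y) <= v (x + y))%R),
      pi != 0 /\ v pi = 1,
      (forall u : nat -> F,
         (forall m : int, exists N, forall i j, (N <= i)%N -> (N <= j)%N ->
              vball (u j) m (u i)) ->
         exists l, forall m : int, exists N, forall i, (N <= i)%N -> vball l m (u i))
    & [/\ uniq C, (0 : F) \in C, (forall c, c \in C -> O_set c),
          (forall c d, c \in C -> d \in C -> p_set (c - d) -> c = d) &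
          (forall x, O_set x -> exists2 c, c \in C & p_set (x - c))]].

Definition resq : nat := size C.

Definition absp (R : realType) (x : F) : R :=
  if x == 0 then 0 else (resq%:R : R) `^ (- (v x)%:~R).

Definition scaling (R : realType) (f : F -> F) (lambda : R) : Prop :=
  forall x y, O_set x -> O_set y ->
    absp R (f x - f y) = (resq%:R : R) `^ lambda * absp R (x - y).

(* the "fractional part" sum_{v <= n < 0} c_n pi^n of x: the finite sum with
   digits in C of negative powers of pi whose difference with x lies in O *)
Definition is_negdigitsum (s : F) : Prop :=
  exists (n : nat) (c : nat -> F), (forall k, c k \in C) /\
    s = \sum_(1 <= k < n.+1) c k * pi ^- k.
Definition fracpart (x : F) : F :=
  xget 0 [set s | is_negdigitsum s /\ O_set (x - s)].
(* [x] = sum_{n >= 0} c_n pi^n  =  x - sum_{n < 0} c_n pi^n *)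
Definition intpart (x : F) : F := x - fracpart x.

Definition open_O (U : set F) : Prop :=
  U `<=` O_set /\ forall x, U x -> exists n : int, vball x n `<=` U.
Definition borel_O : set (set F) := <<s O_set, open_O >>.

Definition haar_O (R : realType) (mu : set F -> \bar R) : Prop :=
  [/\ mu set0 = 0%E,
      (forall A, borel_O A -> (0 <= mu A)%E),
      (forall A : nat -> set F, (forall n, borel_O (A n)) -> trivIset setT A ->
         (fun n => \sum_(k < n) mu (A k))%E @ \oo --> mu (\bigcup_n A n)),
      (forall a B, O_set a -> borel_O B -> mu [set a + x | x in B] = mu B)
    & mu O_set = 1%E].

End LocalField.

From HB Require Import structures.
From mathcomp Require Import all_boot all_order all_algebra.
From mathcomp Require Import all_classical all_reals all_analysis.
From mathcomp Require Import ring zify.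
Import Order.TTheory GRing.Theory Num.Theory.
Local Open Scope classical_set_scope.
Local Open Scope ring_scope.

(* Expand points of O in base pi with digits in C.  A ball of radius q^-k in O
   is the set of points with prescribed first k digits, so O splits into q^k
   such balls, which by translation invariance all have Haar measure q^-k.
   Since distances are integral powers of q, the ratio q^lambda of the scaling
   map forces lambda = L to be a natural number, and [.] only discards digits
   of negative index, so ftilde x - ftilde y = f x - f y whenever
   |x - y| <= q^-L.  Hence the preimage under ftilde of a ball of radius q^-n
   meets each of the q^L balls of radius q^-L in exactly one ball of radius
   q^-(n+L): it has measure q^L q^-(n+L) = q^-n.  The balls form an
   intersection-stable generator of the Borel sets of O, and the pi-lambda
   theorem extends the invariance to every Borel set. *)

Lemma g_sigma_algebra_sub (T : Type) (D : set T) (P : set (set T)) :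
  (forall A, P A -> A `<=` D) -> forall X, <<s D, P >> X -> X `<=` D.
Proof.
move=> PD; apply: (@smallest_sub _ _ _ [set X | X `<=` D]) => //.
split=> //; first by move=> X _; apply: subDsetl.
by move=> X XD; apply: bigcup_sub => i _; exact: XD.
Qed.

(** * Countably additive set functions *)

Section CountablyAdditive.
Variables (R : realType) (T : Type) (D : set T) (G : set (set T)).
Variable mu : set T -> \bar R.
Hypotheses (G_sigma : sigma_algebra D G) (G_sub : forall A, G A -> A `<=` D).
Hypotheses (mu0 : mu set0 = 0%E) (mu_ge0 : forall A, G A -> (0 <= mu A)%E).
Hypothesis mu_sigma_additive : forall A : nat -> set T,
  (forall n, G (A n)) -> trivIset setT A ->
  (fun n => \sum_(k < n) mu (A k))%E @ \oo --> mu (\bigcup_n A n).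

Lemma sigma_set0 : G set0. Proof. by case: G_sigma. Qed.

Lemma sigma_setT : G D.
Proof. by rewrite -(setD0 D); case: G_sigma => _ + _; apply; apply: sigma_set0. Qed.

Lemma sigma_bigcup (A : nat -> set T) : (forall n, G (A n)) -> G (\bigcup_n A n).
Proof. by case: G_sigma => _ _; apply. Qed.

Lemma sigma_setU A B : G A -> G B -> G (A `|` B).
Proof.
move=> GA GB; rewrite -bigcup2E; apply: sigma_bigcup.
by move=> [|[|n]] //=; apply: sigma_set0.
Qed.

Lemma sigma_setD A B : G A -> G B -> G (A `\` B).
Proof.
move=> GA GB; have AD := G_sub _ GA.
have -> : A `\` B = D `\` ((D `\` A) `|` B).
  apply/seteqP; split=> [x [Ax nBx]|x [Dx nx]].
    by split; [exact: AD|move=> [[]|]].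
  by split; [apply: contrapT => nAx; apply: nx; left|move=> Bx; apply: nx; right].
case: G_sigma => _ GC _; apply: (GC); apply: sigma_setU => //.
exact: GC.
Qed.

Lemma measure_bigcup_ord n (A : 'I_n -> set T) : (forall i, G (A i)) ->
  (forall i j, i != j -> A i `&` A j = set0) ->
  mu (\bigcup_(i in setT) A i) = (\sum_(i < n) mu (A i))%E.
Proof.
move=> GA dA; pose A' k := if insub k is Some i then A i else set0.
have tA' : trivIset setT A'.
  move=> i j _ _; rewrite /A'.
  case: insubP => [i' _ <-|_]; last by rewrite set0I => -[].
  case: insubP => [j' _ <-|_]; last by rewrite setI0 => -[].
  by have [->//|ij] := eqVneq i' j'; rewrite dA // => -[].
have GA' k : G (A' k).
  by rewrite /A'; case: insub => [i|]; [exact: GA|exact: sigma_set0].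
have -> : \bigcup_(i in setT) A i = \bigcup_k A' k.
  apply/seteqP; split=> [x [i _ Aix]|x [k _]].
    by exists (val i) => //; rewrite /A' valK.
  by rewrite /A'; case: insub => [i|] // Aix; exists i.
have partial_sums_cst : (fun m => \sum_(k < m) mu (A' k))%E @ \oo -->
    (\sum_(i < n) mu (A i))%E.
  apply: cvg_near_cst; exists n => // m /= nm.
  rewrite -(subnKC nm) big_split_ord /= [X in (_ + X)%E]big1 ?adde0.
    by apply: eq_bigr => i _; rewrite /A' /= valK.
  by move=> i _; rewrite /A' insubF ?mu0 // ltnNge leq_addr.
exact: cvg_unique _ (mu_sigma_additive _ GA' tA') partial_sums_cst.
Qed.

Lemma measure_bigcup_fin (I : finType) (A : I -> set T) : (forall i, G (A i)) ->
  (forall i j, i != j -> A i `&` A j = set0) ->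
  mu (\bigcup_(i in setT) A i) = (\sum_(i : I) mu (A i))%E.
Proof.
move=> GA dA; rewrite (reindex (@enum_val I predT)) /=; last first.
  exact/onW_bij/enum_val_bij.
rewrite -(@measure_bigcup_ord _ (A \o enum_val)); first last.
- by move=> i j ij; apply: dA; apply: contra_neq ij; exact: enum_val_inj.
- by move=> i; apply: GA.
congr mu; apply/seteqP; split=> [x [i _ Aix]|x [i _ Aix]]; last by exists (enum_val i).
by exists (enum_rank i) => //=; rewrite enum_rankK.
Qed.

Lemma measureU A B : G A -> G B -> A `&` B = set0 ->
  mu (A `|` B) = (mu A + mu B)%E.
Proof.
move=> GA GB AB0; pose AB (i : 'I_2) := if val i == 0%N then A else B.
have := @measure_bigcup_ord 2 AB.
rewrite big_ord_recr big_ord_recl big_ord0 /= adde0 => <-.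
- congr mu; apply/seteqP; split=> [x [Ax|Bx]|x [i _]].
  + by exists ord0.
  + by exists ord_max.
  + by rewrite /AB; case: ifP => _ ?; [left|right].
- by move=> i; rewrite /AB; case: ifP.
- move=> [[|[|i]] //= ?] [[|[|j]] //= ?] _ //.
  by rewrite setIC.
Qed.

Lemma measure_nondecreasing_cvg (A : nat -> set T) :
  nondecreasing_seq A -> (forall n, G (A n)) ->
  (fun n => mu (A n)) @ \oo --> mu (\bigcup_n A n).
Proof.
move=> ndA GA; have GD n : G (seqD A n).
  by case: n => [|n] /=; [exact: GA|exact: sigma_setD].
have partial_sums n : mu (A n) = (\sum_(k < n.+1) mu (seqD A k))%E.
  rewrite -(@measure_bigcup_ord n.+1 (fun k => seqD A k)) //.
    congr mu; rewrite -(nondecreasing_bigsetU_seqD n ndA) -bigcup_mkord.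
    apply/seteqP; split=> [x [k /= kn Akx]|x [k _ Akx]]; last by exists (val k) => //=.
    by exists (Ordinal kn).
  move=> i j ij; apply/seteqP; split=> // x [Aix Ajx]; move: ij.
  have /val_inj -> := @trivIset_seqD _ _ ndA i j I I (ex_intro _ x (conj Aix Ajx)).
  by rewrite eqxx.
have := mu_sigma_additive _ GD (trivIset_seqD ndA); rewrite eq_bigcup_seqD.
by rewrite (funext partial_sums) (cvg_shiftS (fun n => \sum_(k < n) mu (seqD A k))%E).
Qed.

Lemma measure_fin_num A : mu D \is a fin_num -> G A -> mu A \is a fin_num.
Proof.
move=> finD GA; rewrite ge0_fin_numE ?mu_ge0 //.
have GDA : G (D `\` A) by apply: sigma_setD => //; exact: sigma_setT.
have : mu D = (mu (D `\` A) + mu A)%E.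
  by rewrite -measureU ?setDKI // setDKU //; exact: G_sub.
move: finD; rewrite ge0_fin_numE ?mu_ge0 //; last exact: sigma_setT.
move=> + eD; rewrite eD; apply: le_lt_trans; apply: leeDr; exact: mu_ge0.
Qed.

Section Preimage.
Variable g : T -> T.
Hypotheses (gD : forall x, D x -> D (g x)) (finD : mu D \is a fin_num).

Let invariant := [set B | [/\ G B, G (D `&` g @^-1` B) & mu (D `&` g @^-1` B) = mu B]].

Lemma invariant_lambda_system : lambda_system D invariant.
Proof.
rewrite /invariant; split=> /=.
- by move=> A [GA _ _]; exact: G_sub.
- have -> : D `&` g @^-1` D = D.
    by apply/seteqP; split=> [x []|x Dx] //; split=> //; exact: gD.
  by split=> //; exact: sigma_setT.
- move=> A B BA [GA GpA mpA] [GB GpB mpB] /=.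
  have -> : D `&` g @^-1` (A `\` B) = (D `&` g @^-1` A) `\` (D `&` g @^-1` B).
    apply/seteqP; split=> x; first by move=> [Dx [Ax nBx]]; split=> // -[_ /nBx].
    by move=> [[Dx Ax] nBx]; split=> //; split=> // Bx; exact: nBx.
  have split_measure X Y : G X -> G Y -> Y `<=` X -> mu X = (mu (X `\` Y) + mu Y)%E.
    by move=> GX GY YX; rewrite -measureU ?setDKU ?setDKI //; exact: sigma_setD.
  have pBA : D `&` g @^-1` B `<=` D `&` g @^-1` A by move=> x [Dx /BA].
  split; [exact: sigma_setD|exact: sigma_setD|].
  have finB := measure_fin_num _ finD GB.
  have eA := split_measure _ _ GA GB BA.
  have epA := split_measure _ _ GpA GpB pBA.
  by rewrite -(addeK (mu (_ `\` _)) finB) -mpB -epA mpA eA mpB addeK.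
- move=> A ndA invA /=.
  have GA n : G (A n) by have [] := invA n.
  have GpA n : G (D `&` g @^-1` A n) by have [] := invA n.
  have -> : D `&` g @^-1` (\bigcup_n A n) = \bigcup_n (D `&` g @^-1` A n).
    apply/seteqP; split=> [x [Dx [n _ Anx]]|x [n _ [Dx Anx]]]; first by exists n.
    by split=> //; exists n.
  have ndpA : nondecreasing_seq (fun n => D `&` g @^-1` A n).
    move=> i j ij; apply/subsetPset => x [Dx Aigx]; split=> //.
    by have /subsetPset := ndA i j ij; apply.
  split; [exact: sigma_bigcup|exact: sigma_bigcup|].
  have mpA : (fun n => mu (D `&` g @^-1` A n)) = (fun n => mu (A n)).
    by apply/funext => n; have [] := invA n.
  have := measure_nondecreasing_cvg _ ndpA GpA; rewrite mpA => cvg_pA.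
  exact: cvg_unique _ cvg_pA (measure_nondecreasing_cvg _ ndA GA).
Qed.

Lemma measure_preserving_generated (P : set (set T)) : setI_closed P ->
  G `<=` <<s D, P >> ->
  (forall A, P A -> [/\ G A, G (D `&` g @^-1` A) & mu (D `&` g @^-1` A) = mu A]) ->
  forall B, G B -> G (D `&` g @^-1` B) /\ mu (D `&` g @^-1` B) = mu B.
Proof.
move=> PI GP Pinv B GB.
have [] // := lambda_system_subset PI invariant_lambda_system Pinv _ (GP _ GB).
by apply: g_sigma_algebra_sub => A /Pinv [GA _ _]; exact: G_sub.
Qed.

End Preimage.

End CountablyAdditive.
Arguments sigma_setU {T D G}.
Arguments measure_bigcup_fin {R T D G mu}.
Arguments measure_preserving_generated {R T D G mu}.

(** * Valuations *)

Section Valuation.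
Variables (F : fieldType) (v : F -> int) (pi : F) (C : seq F).
Hypothesis hF : nonarch_local_field v pi C.

(* [val_ge n x] says that x lies in p^n. *)
Definition val_ge (n : int) (x : F) := x = 0 \/ n <= v x.

Lemma valM x y : x != 0 -> y != 0 -> v (x * y) = v x + v y.
Proof. by case: hF => + _ _ _ _; apply. Qed.
Arguments valM {x y}.

Lemma val_addr_min x y : x != 0 -> y != 0 -> x + y != 0 ->
  Order.min (v x) (v y) <= v (x + y).
Proof. by case: hF => _ + _ _ _; apply. Qed.
Arguments val_addr_min {x y}.

Lemma pi_neq0 : pi != 0. Proof. by case: hF => _ _ []. Qed.
Lemma val_pi : v pi = 1. Proof. by case: hF => _ _ []. Qed.

Lemma val1 : v 1 = 0.
Proof.
have one_neq0 : (1 : F) != 0 := oner_neq0 F.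
by have := valM one_neq0 one_neq0; rewrite mulr1 => h; lia.
Qed.

Lemma valN x : v (- x) = v x.
Proof.
have N1_neq0 : (-1 : F) != 0 by rewrite oppr_eq0 oner_neq0.
have valN1 : v (-1) = 0.
  by have := valM N1_neq0 N1_neq0; rewrite mulrNN mulr1 val1 => h; lia.
have [->|x0] := eqVneq x 0; first by rewrite oppr0.
by rewrite -mulN1r valM // valN1 add0r.
Qed.

Lemma val_expr k : v (pi ^+ k) = k%:Z.
Proof.
elim: k => [|k IHk]; first by rewrite expr0 val1.
by rewrite exprS valM ?expf_neq0 ?pi_neq0 // IHk val_pi -add1n PoszD.
Qed.

Lemma val_exprV k : v (pi ^- k) = - k%:Z.
Proof.
have piXk := expf_neq0 k pi_neq0.
have := valM piXk (invr_neq0 piXk); rewrite mulfV // val1 val_expr.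
by move=> /esym/eqP; rewrite addr_eq0 => /eqP ->; rewrite opprK.
Qed.

Lemma vballE a n x : vball v a n x <-> val_ge n (x - a).
Proof.
split=> [[->|]|[/eqP|]]; rewrite ?subrr ?subr_eq0.
- by left.
- by right.
- by move/eqP; left.
- by right.
Qed.

Lemma val_ge_0 n : val_ge n 0. Proof. by left. Qed.

Lemma val_geW m n x : m <= n -> val_ge n x -> val_ge m x.
Proof. by move=> mn [->|nx]; [left|right; apply: le_trans nx]. Qed.

Lemma val_geD n x y : val_ge n x -> val_ge n y -> val_ge n (x + y).
Proof.
move=> [->|nx]; first by rewrite add0r.
move=> [->|ny]; first by rewrite addr0; right.
have [xy0|xy0] := eqVneq (x + y) 0; first by left.
have [->|x0] := eqVneq x 0; first by rewrite add0r; right.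
have [->|y0] := eqVneq y 0; first by rewrite addr0; right.
by right; apply: le_trans (val_addr_min x0 y0 xy0); rewrite le_min nx ny.
Qed.

Lemma val_geN n x : val_ge n x -> val_ge n (- x).
Proof. by move=> [->|nx]; [left; rewrite oppr0|right; rewrite valN]. Qed.

Lemma val_geB n x y : val_ge n x -> val_ge n y -> val_ge n (x - y).
Proof. by move=> nx ny; apply/val_geD/val_geN. Qed.

Lemma val_geM m n x y : val_ge m x -> val_ge n y -> val_ge (m + n) (x * y).
Proof.
move=> [->|mx]; first by rewrite mul0r; left.
move=> [->|ny]; first by rewrite mulr0; left.
have [->|x0] := eqVneq x 0; first by rewrite mul0r; left.
have [->|y0] := eqVneq y 0; first by rewrite mulr0; left.
by right; rewrite valM // lerD.
Qed.

Lemma val_geMX k n x : val_ge n x -> val_ge (n + k%:Z) (x * pi ^+ k).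
Proof. by move=> nx; apply: val_geM nx _; right; rewrite val_expr. Qed.
Arguments val_geMX k {n x}.

Lemma val_geMXV k n x : val_ge n x -> val_ge (n - k%:Z) (x * pi ^- k).
Proof. by move=> nx; apply: val_geM nx _; right; rewrite val_exprV. Qed.
Arguments val_geMXV k {n x}.

Lemma val_geMX_eq k n x : val_ge (n + k%:Z) (x * pi ^+ k) <-> val_ge n x.
Proof.
split=> [|/val_geMX//]; move=> /(val_geMXV k).
by rewrite -mulrA mulfV ?expf_neq0 ?pi_neq0 // mulr1 addrK.
Qed.

Lemma val_ge_translate n a x : val_ge n (x - a) ->
  forall y, val_ge n (y - x) <-> val_ge n (y - a).
Proof.
move=> xa y; split=> h.
  have -> : y - a = (y - x) + (x - a) by ring.
  exact: val_geD.
have -> : y - x = (y - a) - (x - a) by ring.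
exact: val_geB.
Qed.
Arguments val_ge_translate {n a x}.

(** * Digit expansions *)

Lemma residues_uniq : uniq C. Proof. by case: hF => _ _ _ _ []. Qed.
Lemma residues0 : (0 : F) \in C. Proof. by case: hF => _ _ _ _ []. Qed.

Lemma residues_int c : c \in C -> val_ge 0 c.
Proof. by case: hF => _ _ _ _ [] _ _ + _ _; apply. Qed.

Lemma residues_inj c d : c \in C -> d \in C -> val_ge 1 (c - d) -> c = d.
Proof. by case: hF => _ _ _ _ [] _ _ _ + _; apply. Qed.

Lemma residues_cover x : val_ge 0 x -> exists2 c, c \in C & val_ge 1 (x - c).
Proof. by case: hF => _ _ _ _ [] _ _ _ _; apply. Qed.

Definition digit x := xget 0 [set c | c \in C /\ val_ge 1 (x - c)].

Lemma digit_mem x : digit x \in C.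
Proof. by rewrite /digit; case: xgetP => [y _ []|_]; [|exact: residues0]. Qed.

Lemma digitP x : val_ge 0 x -> val_ge 1 (x - digit x).
Proof.
move=> /residues_cover [c cC xc]; rewrite /digit.
by case: xgetP => [y _ []//|/(_ c) []].
Qed.

Lemma digit_eq x c : val_ge 0 x -> c \in C -> val_ge 1 (x - c) -> digit x = c.
Proof.
move=> x0 cC xc; apply: residues_inj => //; first exact: digit_mem.
have -> : digit x - c = (x - c) - (x - digit x) by ring.
by apply: val_geB => //; apply: digitP.
Qed.

Definition shift x := (x - digit x) / pi.

Lemma shiftE x : x = digit x + pi * shift x.
Proof. by rewrite /shift mulrCA mulfV ?pi_neq0 // mulr1 addrC subrK. Qed.

Lemma shift_int x : val_ge 0 x -> val_ge 0 (shift x).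
Proof. by move=> /digitP /(val_geMXV 1); rewrite expr1. Qed.

Lemma iter_shift_int j x : val_ge 0 x -> val_ge 0 (iter j shift x).
Proof. by move=> x0; elim: j => //= j; apply: shift_int. Qed.

Lemma digit_expansion k x : x =
  \sum_(j < k) digit (iter j shift x) * pi ^+ j + pi ^+ k * iter k shift x.
Proof.
elim: k => [|k IHk]; first by rewrite big_ord0 add0r expr0 mul1r.
by rewrite big_ord_recr /= {1}IHk {1}(shiftE (iter k shift x)) exprSr; ring.
Qed.

Lemma digit_congr x y :
  val_ge 0 x -> val_ge 0 y -> val_ge 1 (x - y) -> digit x = digit y.
Proof.
move=> x0 y0 xy; apply: digit_eq => //; first exact: digit_mem.
have -> : x - digit y = (x - y) + (y - digit y) by ring.
by apply: val_geD => //; apply: digitP.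
Qed.

Lemma shiftB x y : val_ge 0 x -> val_ge 0 y -> val_ge 1 (x - y) ->
  shift x - shift y = (x - y) / pi.
Proof. by move=> x0 y0 xy; rewrite /shift (digit_congr _ _ x0 y0 xy); ring. Qed.

Lemma digits_congr k x y : val_ge 0 x -> val_ge 0 y -> val_ge k%:Z (x - y) ->
  forall j, (j < k)%N -> digit (iter j shift x) = digit (iter j shift y).
Proof.
elim: k x y => [//|k IHk] x y x0 y0 xy.
have xy1 : val_ge 1 (x - y) by apply: val_geW xy; rewrite lez_nat.
case=> [_|j]; first exact: digit_congr.
rewrite ltnS !iterSr => jk; apply: IHk => //; try exact: shift_int.
by rewrite shiftB //; have := val_geMXV 1 xy; rewrite expr1 -addn1 PoszD addrK.
Qed.

Definition digits k x : {ffun 'I_k -> seq_sub C} :=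
  [ffun j : 'I_k => SeqSub (digit_mem (iter j shift x))].

Lemma digits_eqE k x y : val_ge 0 x -> val_ge 0 y ->
  digits k x = digits k y <-> val_ge k%:Z (x - y).
Proof.
move=> x0 y0; split=> [eq_xy|xy]; last first.
  apply/ffunP => j; rewrite !ffunE; apply: val_inj => /=.
  exact: digits_congr xy j (ltn_ord j).
have eq_digit (j : 'I_k) : digit (iter j shift x) = digit (iter j shift y).
  have /(congr1 val) := congr1 (fun t : {ffun 'I_k -> _} => t j) eq_xy.
  by rewrite !ffunE.
rewrite (digit_expansion k x) (digit_expansion k y).
under eq_bigr => j _ do rewrite eq_digit.
have -> : forall a b c : F, a + pi ^+ k * b - (a + pi ^+ k * c) = (b - c) * pi ^+ k.
  by move=> a b c; ring.
by rewrite -[k%:Z]add0r; apply/val_geMX/val_geB; apply: iter_shift_int.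
Qed.

Definition digit_series (c : nat -> F) k := \sum_(j < k) c j * pi ^+ j.

Lemma digit_series_int c k : (forall j, c j \in C) -> val_ge 0 (digit_series c k).
Proof.
move=> c_mem; apply: (big_ind (val_ge 0)) => [|a b|j _]; first exact: val_ge_0.
  exact: val_geD.
by have := val_geMX j (residues_int _ (c_mem j)); apply: val_geW.
Qed.

Lemma digit_seriesS c k :
  digit_series c k.+1 = c 0%N + pi * digit_series (c \o succn) k.
Proof.
rewrite /digit_series big_ord_recl expr0 mulr1 mulr_sumr; congr (_ + _).
by apply: eq_bigr => j _; rewrite exprS /=; ring.
Qed.

Lemma digit_digit_series c k : (forall i, c i \in C) ->
  digit (digit_series c k.+1) = c 0%N.
Proof.
move=> c_mem; apply: digit_eq => //; first exact: digit_series_int _ _ c_mem.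
rewrite digit_seriesS addrAC subrr add0r mulrC -[1]add0r.
by apply/val_geMX/digit_series_int => i; apply: c_mem.
Qed.

Lemma shift_digit_series c k : (forall i, c i \in C) ->
  shift (digit_series c k.+1) = digit_series (c \o succn) k.
Proof.
move=> c_mem; rewrite /shift digit_digit_series // digit_seriesS.
by rewrite addrAC subrr add0r mulrC mulKf ?pi_neq0.
Qed.

Lemma digit_iter_shift_series c k j : (forall i, c i \in C) -> (j < k)%N ->
  digit (iter j shift (digit_series c k)) = c j.
Proof.
elim: j k c => [|j IHj] [|k] c c_mem // jk.
  exact: digit_digit_series.
by rewrite iterSr shift_digit_series // IHj // => i; apply: c_mem.
Qed.

Definition digit_coef {k} (t : {ffun 'I_k -> seq_sub C}) j :=
  if insub j is Some i then val (t i) else 0.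

Lemma digit_coef_mem {k} (t : {ffun 'I_k -> seq_sub C}) j : digit_coef t j \in C.
Proof.
by rewrite /digit_coef; case: insub => [i|]; [exact: ssvalP|exact: residues0].
Qed.

Definition of_digits {k} (t : {ffun 'I_k -> seq_sub C}) :=
  digit_series (digit_coef t) k.

Lemma of_digits_int {k} (t : {ffun 'I_k -> seq_sub C}) : val_ge 0 (of_digits t).
Proof. exact/digit_series_int/digit_coef_mem. Qed.

Lemma of_digitsK {k} (t : {ffun 'I_k -> seq_sub C}) : digits k (of_digits t) = t.
Proof.
apply/ffunP => j; rewrite ffunE; apply: val_inj => /=.
rewrite digit_iter_shift_series //; last exact: digit_coef_mem.
by rewrite /digit_coef; case: insubP => [i _ /val_inj ->|]; rewrite ?ltn_ord.
Qed.

Lemma card_digits k : #|{ffun 'I_k -> seq_sub C}| = (size C ^ k)%N.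
Proof. by rewrite card_ffun card_seq_sub ?residues_uniq // card_ord. Qed.

Lemma negdigitsum_exists k y : val_ge (- k%:Z) y ->
  exists2 c : nat -> F, (forall i, c i \in C) &
    val_ge 0 (y - \sum_(1 <= j < k.+1) c j * pi ^- j).
Proof.
elim: k y => [|k IHk] y yk.
  by exists (fun=> 0) => [_|]; [exact: residues0|rewrite big_geq // subr0].
pose c0 := digit (y * pi ^+ k.+1).
have y_c0 : val_ge (- k%:Z) (y - c0 * pi ^- k.+1).
  have yk0 : val_ge 0 (y * pi ^+ k.+1) by have := val_geMX k.+1 yk; rewrite addNr.
  apply/(val_geMX_eq k.+1); rewrite mulrBl mulfVK ?expf_neq0 ?pi_neq0 //.
  have -> : - k%:Z + k.+1%:Z = 1 by rewrite -addn1 PoszD addrA addNr add0r.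
  exact: digitP.
have [c c_mem yc] := IHk _ y_c0.
exists (fun i => if i == k.+1 then c0 else c i) => [i|].
  by case: eqP => _; [exact: digit_mem|exact: c_mem].
rewrite big_nat_recr //= eqxx (@eq_big_nat _ _ _ 1 k.+1 _ (fun j => c j * pi ^- j)).
  by rewrite opprD addrA addrAC.
by move=> i /andP[_ ik]; rewrite ltn_eqF.
Qed.

Lemma fracpart_spec y :
  is_negdigitsum pi C (fracpart v pi C y) /\ O_set v (y - fracpart v pi C y).
Proof.
have [k yk] : exists k : nat, val_ge (- k%:Z) y.
  have [->|y0] := eqVneq y 0; first by exists 0%N; left.
  by exists `|v y|%N; right; lia.
have [c c_mem yc] := negdigitsum_exists _ _ yk.
pose P s := is_negdigitsum pi C s /\ O_set v (y - s).
have Ps : P (\sum_(1 <= j < k.+1) c j * pi ^- j) by split=> //; exists k, c.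
exact: (@xgetPex _ 0 P (ex_intro _ _ Ps)).
Qed.

Lemma intpart_int y : val_ge 0 (intpart v pi C y).
Proof. exact: (fracpart_spec y).2. Qed.

Lemma intpartB y z :
  val_ge 0 (y - z) -> intpart v pi C y - intpart v pi C z = y - z.
Proof.
move=> yz; suff eq_frac : fracpart v pi C y = fracpart v pi C z.
  by rewrite /intpart eq_frac; ring.
rewrite /fracpart; congr xget; apply/funext => s; apply/propext.
split=> -[s_sum s_int]; split=> //.
  have -> : z - s = (y - s) - (y - z) by ring.
  exact: val_geB.
have -> : y - s = (z - s) + (y - z) by ring.
exact: val_geD.
Qed.

Lemma size_residues_gt1 : (1 < size C)%N.
Proof.
have digit1_neq0 : digit 1 != 0.
  have one_int : val_ge 0 (1 : F) by right; rewrite val1.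
  apply/eqP => d1; have := digitP _ one_int.
  by rewrite d1 subr0 => -[/eqP|]; rewrite ?oner_eq0 // val1.
move: (digit_mem 1) residues0 digit1_neq0.
by case: C => [|a [|b l]] //=; rewrite !inE => /eqP -> /eqP ->; rewrite eqxx.
Qed.

(** * Balls of O *)

Definition oball x (k : nat) : set F := [set y | O_set v y /\ val_ge k%:Z (y - x)].

Lemma oball_int x k : oball x k `<=` O_set v.
Proof. by move=> y []. Qed.

Lemma oball_center x y k : oball x k y -> oball x k = oball y k.
Proof.
move=> [_ yx]; apply/seteqP; split=> z [z0 zx]; split=> //.
  by apply/(val_ge_translate yx).
by apply/(val_ge_translate yx).
Qed.
Arguments oball_center {x y k}.

Lemma oball_of_digits k (t : {ffun 'I_k -> seq_sub C}) :
  oball (of_digits t) k = [set y | O_set v y /\ digits k y = t].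
Proof.
apply/seteqP; split=> y [y0 yt]; split=> //.
  by rewrite -(of_digitsK t); apply/digits_eqE => //; exact: of_digits_int.
by apply/digits_eqE; rewrite ?of_digitsK //; exact: of_digits_int.
Qed.

Lemma oball_partition k : O_set v = \bigcup_(t in setT) oball (@of_digits k t) k.
Proof.
apply/seteqP; split=> [y y0|y [t _ /oball_int//]].
by exists (digits k y) => //; rewrite oball_of_digits.
Qed.

Lemma oball_disjoint k (t t' : {ffun 'I_k -> seq_sub C}) :
  t != t' -> oball (of_digits t) k `&` oball (of_digits t') k = set0.
Proof.
move=> tt'; apply/seteqP; split=> // y [].
rewrite !oball_of_digits => -[_ yt] [_ yt'].
by move: tt'; rewrite -yt -yt' eqxx.
Qed.

Lemma oball_translate x k : val_ge 0 x -> oball x k = [set x + z | z in oball 0 k].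
Proof.
move=> x0; apply/seteqP; split=> [y [y0 yx]|_ [z [z0 z_int] <-]].
  by exists (y - x); [split; [exact: val_geB|rewrite subr0]|ring].
split; first exact: val_geD.
by rewrite subr0 in z_int; rewrite addrC addKr.
Qed.

Lemma oball_open x k : val_ge 0 x -> open_O v (oball x k).
Proof.
move=> x0; split=> [|y [y0 yx]]; first exact: oball_int.
exists k%:Z => z zy; have {}zy : val_ge k%:Z (z - y).
  by case: zy => [->|]; [left; rewrite subrr|right].
split; last by apply/(val_ge_translate yx).
have -> : z = y + (z - y) by ring.
by apply: val_geD => //; apply: val_geW zy.
Qed.

Lemma oball_le x k m : (k <= m)%N -> oball x m `<=` oball x k.
Proof. by move=> km y [y0 yx]; split=> //; apply: val_geW yx; rewrite lez_nat. Qed.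

(* The empty set is included to make the family intersection-stable. *)
Definition oballs : set (set F) :=
  [set B | B = set0 \/ exists x k, val_ge 0 x /\ B = oball x k].

Lemma oballs_setI : setI_closed oballs.
Proof.
move=> A B [->|[x [k [x0 ->]]]]; first by left; rewrite set0I.
move=> [->|[x' [k' [x'0 ->]]]]; first by left; rewrite setI0.
have [[y [yx yx']]|disj] := pselect (oball x k `&` oball x' k' !=set0); last first.
  by left; apply/seteqP; split=> // y xy; apply: disj; exists y.
have y0 : val_ge 0 y by case: yx.
right; exists y; rewrite (oball_center yx) (oball_center yx').
have [kk'|k'k] := leqP k k'.
  by exists k'; split=> //; apply/setIidr/oball_le.
by exists k; split=> //; apply/setIidl/oball_le/ltnW.
Qed.

Lemma borel_O_sub A : borel_O v A -> A `<=` O_set v.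
Proof. by apply: g_sigma_algebra_sub => U []. Qed.

Lemma borel_oball x k : val_ge 0 x -> borel_O v (oball x k).
Proof. by move=> x0; apply: sub_sigma_algebra; exact: oball_open. Qed.

Lemma borel_O_generated : borel_O v `<=` <<s O_set v, oballs >>.
Proof.
apply: smallest_sub => [|U [U_int U_open]]; first exact: smallest_sigma_algebra.
pose V n := \big[setU/set0]_(t : {ffun 'I_n -> seq_sub C} |
  `[< oball (of_digits t) n `<=` U >]) oball (of_digits t) n.
have -> : U = \bigcup_n V n.
  apply/seteqP; split=> [x Ux|x [n _]]; last first.
    move: x; apply: (big_ind (fun S => S `<=` U)) => [//|A B AU BU x|t /asboolP //].
    by move=> [/AU|/BU].
  have [m x_m] := U_open x Ux; have x0 := U_int x Ux.
  exists `|m|%N => //; rewrite /V (bigD1 (digits `|m|%N x)) /=; last first.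
    apply/asboolP => y; rewrite oball_of_digits.
    move=> -[y0 /(digits_eqE _ _ _ y0 x0) yx].
    by apply/x_m/vballE; apply: val_geW yx; lia.
  by left; rewrite oball_of_digits.
apply: sigma_algebra_bigcup => n; apply: big_ind => [|A B|t _].
- exact: sigma_algebra0.
- exact: sigma_setU (smallest_sigma_algebra _ _) A B.
- apply: sub_sigma_algebra; right; exists (of_digits t), n.
  by split=> //; exact: of_digits_int.
Qed.

(** * Haar measure and scaling maps *)

Section Measure.
Variables (R : realType) (mu : set F -> \bar R).
Hypothesis mu_haar : haar_O v mu.

Let borel_sigma : sigma_algebra (O_set v) (borel_O v) := smallest_sigma_algebra _ _.
Let mu0 : mu set0 = 0%E. Proof. by case: mu_haar. Qed.
Let mu_ge0 A : borel_O v A -> (0 <= mu A)%E.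
Proof. by case: mu_haar => _ + _ _ _; apply. Qed.
Let mu_sigma := let: And5 _ _ mu_sigma _ _ := mu_haar in mu_sigma.

Let mu_bigcup_fin := measure_bigcup_fin borel_sigma mu0 mu_sigma.

Lemma measure_oball x k : val_ge 0 x -> mu (oball x k) = ((size C ^ k)%:R^-1)%:E.
Proof.
move=> x0; have mu_oball y : val_ge 0 y -> mu (oball y k) = mu (oball 0 k).
  case: mu_haar => _ _ _ mu_translate _ y0.
  by rewrite oball_translate // mu_translate //; apply: borel_oball; exact: val_ge_0.
have oneE : 1%E = (mu (oball 0 k) *+ (size C ^ k))%E.
  case: mu_haar => _ _ _ _ <-; rewrite (oball_partition k) mu_bigcup_fin; last 2 first.
  - by move=> t; apply: borel_oball; exact: of_digits_int.
  - by move=> t t'; exact: oball_disjoint.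
  rewrite (eq_bigr (fun=> mu (oball 0 k))); last first.
    by move=> t _; apply/mu_oball/of_digits_int.
  by rewrite sumr_const card_digits.
have Q_gt0 : (0 < size C ^ k)%N by rewrite expn_gt0 (ltn_trans _ size_residues_gt1).
have := mu_ge0 _ (borel_oball 0 k (val_ge_0 0)).
rewrite (mu_oball x x0); move: oneE; case: (mu (oball 0 k)) => [r|//|//].
  have Q_neq0 : (size C ^ k)%:R != 0 :> R by rewrite pnatr_eq0 -lt0n.
  rewrite -EFin_natmul => -[oneE] _; congr EFin; apply: (mulIf Q_neq0).
  by rewrite mulVf // mulr_natr -oneE.
by case: (size C ^ k)%N Q_gt0 => // m _; rewrite enatmul_pinfty.
Qed.

Section Scaling.
Variables (f : F -> F) (lambda : R).
Hypotheses (lambda_ge0 : 0 <= lambda) (f_scaling : scaling v C f lambda).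

Lemma resq_gt1 : 1 < (resq C)%:R :> R.
Proof. by rewrite ltr1n; exact: size_residues_gt1. Qed.

Lemma absp_neq0 x : x != 0 -> absp v C R x = (resq C)%:R `^ (- (v x)%:~R).
Proof. by move=> x0; rewrite /absp (negbTE x0). Qed.

Lemma scaling_val x y : val_ge 0 x -> val_ge 0 y -> x != y ->
  f x - f y != 0 /\ (- v (f x - f y))%:~R = lambda - (v (x - y))%:~R :> R.
Proof.
move=> x0 y0 xy; have q_gt0 : 0 < (resq C)%:R :> R := lt_trans ltr01 resq_gt1.
have := f_scaling x y x0 y0; rewrite (absp_neq0 (x - y)); last by rewrite subr_eq0.
rewrite -powRD; last by rewrite (gt_eqF q_gt0) implybT.
have [fxy0|fxy] := eqVneq (f x - f y) 0.
  by rewrite fxy0 /absp eqxx => /esym/eqP; rewrite powR_eq0 gt_eqF.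
rewrite absp_neq0 // => /(congr1 (@ln R)); rewrite !ln_powR.
by move=> /(mulIf (lt0r_neq0 (ln_gt0 resq_gt1))) valE; rewrite intrN.
Qed.

Definition scaling_exponent : nat := `|- v (f 1 - f 0)|%N.
Local Notation L := scaling_exponent.

(* Compare |f 1 - f 0| = q^lambda with the integral powers of q. *)
Lemma scaling_exponentE : lambda = L%:R.
Proof.
have one_int : val_ge 0 (1 : F) by right; rewrite val1.
have [_] := scaling_val 1 0 one_int (val_ge_0 0) (oner_neq0 F).
rewrite !subr0 val1 subr0 => lambdaE.
by rewrite -lambdaE /L natr_absz ger0_norm // -(ler0z R) lambdaE.
Qed.

Lemma scaling_valB x y : val_ge 0 x -> val_ge 0 y -> x != y ->
  f x - f y != 0 /\ v (f x - f y) = v (x - y) - L%:Z.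
Proof.
move=> x0 y0 xy; have [fxy valE] := scaling_val x y x0 y0 xy; split=> //.
by move: valE; rewrite scaling_exponentE -[L%:R]/(L%:Z%:~R) -intrB => /intr_inj; lia.
Qed.

Lemma scaling_val_ge k x y : val_ge 0 x -> val_ge 0 y ->
  val_ge (k + L%:Z) (x - y) <-> val_ge k (f x - f y).
Proof.
move=> x0 y0; have [->|xy] := eqVneq x y; first by rewrite !subrr; split=> _; left.
have [fxy valE] := scaling_valB x y x0 y0 xy.
have xy0 : x - y != 0 by rewrite subr_eq0.
split=> -[/eqP|kxy]; rewrite ?(negbTE xy0) ?(negbTE fxy) //; right; lia.
Qed.

Definition ftilde x := intpart v pi C (f x).

Lemma ftilde_int x : val_ge 0 (ftilde x).
Proof. exact: intpart_int. Qed.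

Lemma ftildeB x y : val_ge 0 x -> val_ge 0 y -> val_ge L%:Z (x - y) ->
  ftilde x - ftilde y = f x - f y.
Proof.
by move=> x0 y0 xy; apply: intpartB; apply/(scaling_val_ge 0).
Qed.

Lemma ftilde_val_ge k x y : val_ge 0 x -> val_ge 0 y -> val_ge L%:Z (x - y) ->
  val_ge (k%:Z + L%:Z) (x - y) <-> val_ge k%:Z (ftilde x - ftilde y).
Proof. by move=> x0 y0 xy; rewrite ftildeB //; exact: scaling_val_ge. Qed.

Lemma preimage_oball_open z n : open_O v (O_set v `&` ftilde @^-1` oball z n).
Proof.
split=> [x []//|x [x0 [_ xz]]]; exists (n%:Z + L%:Z) => y /vballE yx.
have yxL : val_ge L%:Z (y - x) by apply: val_geW yx; rewrite lerDr.
have y0 : val_ge 0 y.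
  by rewrite -(subrK x y); apply: val_geD => //; apply: val_geW yxL.
split=> //; split; first exact: ftilde_int.
by apply/(val_ge_translate xz); apply/ftilde_val_ge.
Qed.

Lemma oball_preimage_oball x z n : val_ge 0 x -> oball z n (ftilde x) ->
  oball x L `&` (O_set v `&` ftilde @^-1` oball z n) = oball x (n + L).
Proof.
move=> x0 xz; rewrite (oball_center xz); apply/seteqP; split=> y.
  by move=> [[y0 yx] [_ [_ yn]]]; split=> //; rewrite PoszD; apply/ftilde_val_ge.
move=> [y0 ynL]; have yx : val_ge L%:Z (y - x).
  by apply: val_geW ynL; rewrite lez_nat leq_addl.
do 2!split=> //; split; first exact: ftilde_int.
by apply/ftilde_val_ge; rewrite -?PoszD.
Qed.

(* Counting: u |-> digits n (ftilde (x0 + pi^L u)) is injective on the q^n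
   digit strings u of length n, hence onto. *)
Lemma oball_meets_preimage x0 z n : val_ge 0 x0 -> val_ge 0 z ->
  exists2 x, oball x0 L x & oball z n (ftilde x).
Proof.
move=> x00 z0; pose x (u : {ffun 'I_n -> seq_sub C}) := x0 + of_digits u * pi ^+ L.
have x_x0 u : val_ge L%:Z (x u - x0).
  by rewrite /x addrC addKr; have := val_geMX L (of_digits_int u); rewrite add0r.
have x_int u : val_ge 0 (x u).
  by apply: val_geD => //; apply: val_geW (val_geMX L (of_digits_int u)); rewrite add0r.
have x_inj : injective (fun u => digits n (ftilde (x u))).
  move=> u u' /(digits_eqE _ _ _ (ftilde_int _) (ftilde_int _)).
  have x_close : val_ge L%:Z (x u - x u') by apply/(val_ge_translate (x_x0 u')).
  move=> /(ftilde_val_ge _ _ _ (x_int u) (x_int u') x_close).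
  have -> : x u - x u' = (of_digits u - of_digits u') * pi ^+ L by rewrite /x; ring.
  move=> /val_geMX_eq /(digits_eqE _ _ _ (of_digits_int u) (of_digits_int u')).
  by rewrite !of_digitsK.
have [xinv _ xinvK] := injF_bij x_inj.
exists (x (xinv (digits n z))); first by split; [exact: x_int|exact: x_x0].
split; first exact: ftilde_int.
by apply/(digits_eqE _ _ _ (ftilde_int _) z0); exact: xinvK.
Qed.

Lemma measure_preimage_oball z n : val_ge 0 z ->
  mu (O_set v `&` ftilde @^-1` oball z n) = mu (oball z n).
Proof.
move=> z0; set P := O_set v `&` ftilde @^-1` oball z n.
have piece s :
    exists2 x, val_ge 0 x & oball (@of_digits L s) L `&` P = oball x (n + L).
  have [x xs xz] := oball_meets_preimage _ _ n (of_digits_int s) z0.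
  have x0 : val_ge 0 x by case: xs.
  by exists x; rewrite // (oball_center xs) oball_preimage_oball.
have -> : P = \bigcup_(s in setT) (oball (@of_digits L s) L `&` P).
  by rewrite -setI_bigcupl -oball_partition setIidr // => x [].
rewrite mu_bigcup_fin; first last.
- move=> s s' ss'; rewrite setIACA setIid oball_disjoint // set0I //.
- by move=> s; have [x x0 ->] := piece s; exact: borel_oball.
rewrite (eq_bigr (fun=> ((size C ^ (n + L))%:R^-1)%:E)); last first.
  by move=> s _; have [x x0 ->] := piece s; exact: measure_oball.
have Q_neq0 m : (size C ^ m)%:R != 0 :> R.
  by rewrite pnatr_eq0 expn_eq0 negb_and (gtn_eqF (ltn_trans _ size_residues_gt1)).
rewrite sumr_const card_digits measure_oball // -[LHS]/(_ *+ _)%E -EFin_natmul.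
congr EFin.
by rewrite -(mulr_natr (_^-1)) expnD natrM invfM -mulrA mulVf // mulr1.
Qed.

Lemma ftilde_measure_preserving B : borel_O v B ->
  borel_O v (O_set v `&` ftilde @^-1` B) /\ mu (O_set v `&` ftilde @^-1` B) = mu B.
Proof.
apply: (measure_preserving_generated borel_sigma borel_O_sub mu0 mu_ge0 mu_sigma).
- by move=> x _; exact: ftilde_int.
- by case: mu_haar => _ _ _ _ ->.
- exact: oballs_setI.
- exact: borel_O_generated.
move=> _ [->|[z [n [z0 ->]]]].
  by rewrite preimage_set0 setI0; split=> //; exact: sigma_algebra0.
split; [exact: borel_oball|apply: sub_sigma_algebra; exact: preimage_oball_open|].
exact: measure_preimage_oball.
Qed.

End Scaling.

End Measure.

End Valuation.
Arguments ftilde_measure_preserving {F v pi C} hF {R mu} mu_haar {f lambda}.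

Theorem lemma3p1 (R : realType) (F : fieldType) (v : F -> int) (pi : F)
  (C : seq F) (hF : nonarch_local_field v pi C)
  (mu : set F -> \bar R) (hmu : haar_O v mu)
  (f : F -> F) (lambda : R) (hlam : 0 <= lambda)
  (hf : scaling v C f lambda) :
  forall B, borel_O v B ->
    let ftilde := fun x => intpart v pi C (f x) in
    borel_O v [set x | O_set v x /\ B (ftilde x)] /\
    mu [set x | O_set v x /\ B (ftilde x)] = mu B.
Proof. by move=> B hB ftilde; exact: (ftilde_measure_preserving hF hmu hlam hf B hB). Qed.
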